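(* Let $c>0$, $T_{\max}>0$, let $M,K\ge1$ be integers and $\bm{r}^{\mathrm{mic}}_1,\dots,\bm{r}^{\mathrm{mic}}_M\in\mathbb{R}^3$ with $E_M=\{\bm{r}^{\mathrm{mic}}_m\}$. Let $\kappa:\mathbb{R}\to\mathbb{R}$ be continuous with $\kappa(0)>0$ and $\lim_{|t|\to+\infty}\kappa(t)=0$, and assume $$\forall\tau\in[0,T_{\max}],\qquad\int_0^{T_{\max}}\kappa(t-\tau)\,dt>0.$$ Then there exists $N'\in\mathbb{N}^*$ such that for all integers $N\ge N'$ and $f_s>0$ with $T_{\max}=(N-1)/f_s$, the operator $\Gamma^K$ (built with these $N$ and $f_s$) is amplitude lower-bounded, i.e. there is $C>0$ with $\|\Gamma^K(\bm{a},\bm{r})\|_2\ge C\sum_{k=1}^K a_k$ for all $(\bm{a},\bm{r})\in\mathbb{R}_+^K\times\mathscr{C}^K$.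
   Context: $\mathbb{R}_+=[0,+\infty)$, $\|\cdot\|_2$ is the Euclidean norm. Given $N$ and $f_s$, for $\bm{r}\in\mathbb{R}^3\setminus E_M$, $\gamma(\bm{r})\in\mathbb{R}^{MN}$ has components $\gamma_{m,n}(\bm{r})=\dfrac{\kappa\big(n/f_s-\|\bm{r}-\bm{r}^{\mathrm{mic}}_m\|_2/c\big)}{4\pi\|\bm{r}-\bm{r}^{\mathrm{mic}}_m\|_2}$, $1\le m\le M$, $0\le n\le N-1$. $\mathscr{C}=\bigcap_{m=1}^M\overline{B(\bm{r}^{\mathrm{mic}}_m,cT_{\max})}\setminus E_M$. $\Gamma^K(\bm{a},\bm{r})=\sum_{k=1}^K a_k\gamma(\bm{r}_k)$. *)

From Stdlib Require Import Reals Lra List.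
From Coquelicot Require Import Coquelicot.
Import ListNotations.
Open Scope R_scope.

Definition pt : Type := (R * R * R)%type.

Definition dist3 (p q : pt) : R :=
  let '(x1, y1, z1) := p in
  let '(x2, y2, z2) := q in
  sqrt ((x1 - x2) ^ 2 + (y1 - y2) ^ 2 + (z1 - z2) ^ 2).

Definition fsum (n : nat) (f : nat -> R) : R :=
  fold_right Rplus 0 (map f (seq 0 n)).

(* gamma_{m,n}(r), microphones indexed 0..M-1 (paper: 1..M). *)
Definition gamma_mn (c fs : R) (kappa : R -> R) (mic : nat -> pt)
    (m n : nat) (r : pt) : R :=
  kappa (INR n / fs - dist3 r (mic m) / c) / (4 * PI * dist3 r (mic m)).

(* || Gamma^K(a, r) ||_2, the Euclidean norm in R^{MN};
   sources indexed 0..K-1. *)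
Definition GammaK_norm (c fs : R) (kappa : R -> R) (M N K : nat)
    (mic : nat -> pt) (a : nat -> R) (r : nat -> pt) : R :=
  sqrt (fsum M (fun m => fsum N (fun n =>
          (fsum K (fun k => a k * gamma_mn c fs kappa mic m n (r k))) ^ 2))).

Definition in_Cset (c Tmax : R) (M : nat) (mic : nat -> pt) (p : pt) : Prop :=
  (forall m, (m < M)%nat -> dist3 p (mic m) <= c * Tmax) /\
  (forall m, (m < M)%nat -> p <> mic m).

From Stdlib Require Import Reals Lra Lia List.
From Coquelicot Require Import Coquelicot.
Open Scope R_scope.

(* For one microphone m, summing Gamma_{m,n} over n gives, for each source k,
   a_k / (4 pi d_k) times f_s times a left Riemann sum of kappa shifted by the
   delay tau_k = d_k / c, with step 1/f_s over [0, Tmax].  These Riemann sums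
   converge to the integral of kappa (t - tau) over [0, Tmax] uniformly in
   tau, and that integral has a positive minimum over tau in [0, Tmax]; so for
   N large each sum is at least d f_s.  As d_k <= c Tmax, the entries of the
   m-th block of Gamma^K then sum to at least a multiple of sum_k a_k, and
   this sum is at most N times the Euclidean norm. *)

Lemma fsum_0 f : fsum 0 f = 0.
Proof. reflexivity. Qed.

Lemma fsum_S n f : fsum (S n) f = fsum n f + f n.
Proof.
  unfold fsum. rewrite seq_S, map_app, fold_right_app; simpl.
  generalize (f n). induction (map f (seq 0 n)) as [|x l IH]; intros y; simpl.
  - lra.
  - rewrite IH. lra.
Qed.

Lemma fsum_le n f g : (forall i, (i < n)%nat -> f i <= g i) -> fsum n f <= fsum n g.
Proof.
  induction n as [|n IH]; intros Hfg; [apply Rle_refl|].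
  rewrite !fsum_S. apply Rplus_le_compat; [apply IH; intros|]; apply Hfg; lia.
Qed.

Lemma fsum_ext n f g : (forall i, (i < n)%nat -> f i = g i) -> fsum n f = fsum n g.
Proof.
  intros Hfg. apply Rle_antisym; apply fsum_le; intros i Hi; rewrite Hfg; auto; lra.
Qed.

Lemma fsum_mult_l n c f : fsum n (fun i => c * f i) = c * fsum n f.
Proof. induction n as [|n IH]; [rewrite !fsum_0; ring|]. rewrite !fsum_S, IH. ring. Qed.

Lemma fsum_plus n f g : fsum n (fun i => f i + g i) = fsum n f + fsum n g.
Proof. induction n as [|n IH]; [rewrite !fsum_0; ring|]. rewrite !fsum_S, IH. ring. Qed.

Lemma fsum_const n c : fsum n (fun _ => c) = INR n * c.
Proof. induction n as [|n IH]; [rewrite fsum_0; simpl; ring|]. rewrite !fsum_S, IH, S_INR. ring. Qed.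

Lemma fsum_swap n k f :
  fsum n (fun i => fsum k (fun j => f i j)) = fsum k (fun j => fsum n (fun i => f i j)).
Proof.
  induction n as [|n IH].
  - rewrite fsum_0, (fsum_ext k _ (fun _ => 0)), fsum_const by reflexivity. ring.
  - rewrite fsum_S, IH, <- fsum_plus. apply fsum_ext; intros; rewrite fsum_S; reflexivity.
Qed.

Lemma fsum_nonneg n f : (forall i, (i < n)%nat -> 0 <= f i) -> 0 <= fsum n f.
Proof. intros Hf. rewrite <- (Rmult_0_r (INR n)), <- fsum_const. now apply fsum_le. Qed.

Lemma fsum_ge_term n f j :
  (forall i, (i < n)%nat -> 0 <= f i) -> (j < n)%nat -> f j <= fsum n f.
Proof.
  induction n as [|n IH]; intros Hf Hj; [lia|].
  rewrite fsum_S. destruct (Nat.eq_dec j n) as [->|Hjn].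
  - assert (0 <= fsum n f) by (apply fsum_nonneg; intros; apply Hf; lia). lra.
  - assert (f j <= fsum n f) by (apply IH; [intros; apply Hf|]; lia).
    assert (0 <= f n) by (apply Hf; lia). lra.
Qed.

Lemma Rabs_le_sqrt_fsum_sq n f j :
  (j < n)%nat -> Rabs (f j) <= sqrt (fsum n (fun i => f i ^ 2)).
Proof.
  intros Hj. rewrite <- sqrt_Rsqr_abs, Rsqr_pow2. apply sqrt_le_1_alt.
  apply (fsum_ge_term n (fun i => f i ^ 2)); [intros; apply pow2_ge_0|exact Hj].
Qed.

Lemma fsum_row_le_norm M N (x : nat -> nat -> R) m : (m < M)%nat ->
  fsum N (x m) <= INR N * sqrt (fsum M (fun m => fsum N (fun n => x m n ^ 2))).
Proof.
  intros Hm. rewrite <- fsum_const. apply fsum_le. intros n Hn.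
  apply (Rle_trans _ (Rabs (x m n))); [apply Rle_abs|].
  apply (Rle_trans _ _ _ (Rabs_le_sqrt_fsum_sq N (x m) n Hn)).
  apply sqrt_le_1_alt, (fsum_ge_term M (fun m => fsum N (fun n => x m n ^ 2))); [|exact Hm].
  intros; apply fsum_nonneg; intros; apply pow2_ge_0.
Qed.

Lemma ex_RInt_continuous_R (g : R -> R) a b : (forall x, continuous g x) -> ex_RInt g a b.
Proof. intros Hg. apply (ex_RInt_continuous (V := R_CompleteNormedModule)); auto. Qed.

Lemma RInt_cell_error (g : R -> R) a h eps : 0 <= h -> (forall x, continuous g x) ->
  (forall t, a <= t <= a + h -> Rabs (g t - g a) <= eps) ->
  Rabs (RInt g a (a + h) - h * g a) <= h * eps.
Proof.
  intros Hh Hg Hosc.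
  replace (RInt g a (a + h) - h * g a) with (RInt (fun t => g t - g a) a (a + h)).
  - replace (h * eps) with ((a + h - a) * eps) by ring.
    apply abs_RInt_le_const; [lra| |exact Hosc].
    apply (ex_RInt_minus (V := R_NormedModule));
      [now apply ex_RInt_continuous_R|apply ex_RInt_const].
  - rewrite (RInt_minus g (fun _ => g a)) by first [apply ex_RInt_const | now apply ex_RInt_continuous_R].
    rewrite RInt_const. unfold minus, plus, opp, scal; simpl; unfold mult; simpl. ring.
Qed.

Lemma left_riemann_sum_error (g : R -> R) h eps k : 0 < h -> (forall x, continuous g x) ->
  (forall s t, 0 <= s -> s <= t <= s + h -> t <= INR k * h -> Rabs (g t - g s) <= eps) ->
  Rabs (RInt g 0 (INR k * h) - h * fsum k (fun n => g (INR n * h))) <= INR k * h * eps.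
Proof.
  intros Hh Hg. induction k as [|k IH]; intros Hosc.
  - simpl INR. rewrite Rmult_0_l, RInt_point, fsum_0. unfold zero; simpl.
    rewrite Rmult_0_r, Rminus_0_r, Rabs_R0. lra.
  - rewrite fsum_S, S_INR in *. set (x := INR k * h) in *.
    assert (Hx : 0 <= x) by (unfold x; pose proof (pos_INR k); nra).
    replace ((INR k + 1) * h) with (x + h) in * by (unfold x; ring).
    assert (Hleft : Rabs (RInt g 0 x - h * fsum k (fun n => g (INR n * h))) <= x * eps).
    { apply IH. intros s t Hs Hst Ht. apply Hosc; lra. }
    assert (Hcell : Rabs (RInt g x (x + h) - h * g x) <= h * eps).
    { apply RInt_cell_error; [lra|exact Hg|]. intros t Ht. apply Hosc; lra. }
    rewrite <- (RInt_Chasles g 0 x (x + h)) by now apply ex_RInt_continuous_R.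
    unfold plus; simpl.
    replace (RInt g 0 x + RInt g x (x + h) - h * (fsum k (fun n => g (INR n * h)) + g x))
      with ((RInt g 0 x - h * fsum k (fun n => g (INR n * h))) + (RInt g x (x + h) - h * g x))
      by ring.
    eapply Rle_trans; [apply Rabs_triang|]. lra.
Qed.

Lemma RInt_shift (g : R -> R) a b tau : (forall x, continuous g x) ->
  RInt (fun t => g (t - tau)) a b = RInt g (a - tau) (b - tau).
Proof.
  intros Hg.
  assert (E := RInt_comp_lin g 1 (- tau) a b).
  replace (1 * a + - tau) with (a - tau) in E by ring.
  replace (1 * b + - tau) with (b - tau) in E by ring.
  rewrite <- E by now apply ex_RInt_continuous_R.
  apply RInt_ext. intros t _. unfold scal; simpl; unfold mult; simpl.
  rewrite Rmult_1_l. f_equal. ring.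
Qed.

Lemma continuity_pt_RInt_shift (g : R -> R) a b tau : (forall x, continuous g x) ->
  continuity_pt (fun tau => RInt (fun t => g (t - tau)) a b) tau.
Proof.
  intros Hg.
  apply (continuity_pt_ext (fun tau => RInt g (a - tau) (b - tau)));
    [intros; symmetry; now apply RInt_shift|].
  apply continuity_pt_filterlim.
  apply (continuous_comp_2 (fun tau => a - tau) (fun tau => b - tau) (fun u v => RInt g u v)).
  - apply (continuous_minus (V := R_NormedModule)); [apply continuous_const|apply continuous_id].
  - apply (continuous_minus (V := R_NormedModule)); [apply continuous_const|apply continuous_id].
  - apply (continuous_RInt (V := R_NormedModule) g _ _ (fun u v => RInt g u v)).
    apply filter_forall. intros z.
    apply (RInt_correct (V := R_CompleteNormedModule)). now apply ex_RInt_continuous_R.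
Qed.

Lemma RInt_shift_pos_min (g : R -> R) T : 0 <= T -> (forall x, continuous g x) ->
  (forall tau, 0 <= tau <= T -> 0 < RInt (fun t => g (t - tau)) 0 T) ->
  exists m, 0 < m /\ forall tau, 0 <= tau <= T -> m <= RInt (fun t => g (t - tau)) 0 T.
Proof.
  intros HT Hg Hpos.
  destruct (continuity_ab_min (fun tau => RInt (fun t => g (t - tau)) 0 T) 0 T)
    as [tau0 [Hmin Htau0]]; [exact HT|intros; now apply continuity_pt_RInt_shift|].
  exists (RInt (fun t => g (t - tau0)) 0 T). split; [now apply Hpos|exact Hmin].
Qed.

Lemma continuous_bounded_segment (g : R -> R) a b : a <= b -> (forall x, continuous g x) ->
  exists B, 0 < B /\ forall x, a <= x <= b -> Rabs (g x) <= B.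
Proof.
  intros Hab Hg.
  destruct (continuity_ab_maj (fun x => Rabs (g x)) a b) as [x0 [Hmax _]];
    [exact Hab|intros; apply continuity_pt_filterlim, continuous_Rabs_comp, Hg|].
  exists (Rabs (g x0) + 1). split; [pose proof (Rabs_pos (g x0)); lra|].
  intros x Hx. specialize (Hmax x Hx). simpl in Hmax. lra.
Qed.

(* The sum has k + 1 nodes: the extra node at t = T is the one sampled by
   n = N - 1 when T = (N - 1) / f_s. *)
Lemma shifted_riemann_sum_uniform (g : R -> R) T eps :
  0 < T -> 0 < eps -> (forall x, continuous g x) ->
  exists h0, 0 < h0 /\ forall h k tau, 0 < h <= h0 -> INR k * h = T -> 0 <= tau <= T ->
    Rabs (RInt (fun t => g (t - tau)) 0 T - h * fsum (S k) (fun n => g (INR n * h - tau)))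
    <= eps.
Proof.
  intros HT Heps Hg.
  destruct (continuous_bounded_segment g (- T) T) as [B [HB Hbound]]; [lra|exact Hg|].
  assert (Heps' : 0 < eps / (2 * T)) by (apply Rdiv_lt_0_compat; lra).
  destruct (Heine_cor2 (f := g) (a := - T) (b := T) (fun x _ => proj2 (continuity_pt_filterlim g x) (Hg x))
              (mkposreal _ Heps')) as [[delta Hdelta] Hunif]; simpl in Hunif.
  exists (Rmin (delta / 2) (eps / (2 * B))). split.
  { apply Rmin_glb_lt; apply Rdiv_lt_0_compat; lra. }
  intros h k tau [Hh Hh0] Hkh Htau.
  pose proof (Rmin_l (delta / 2) (eps / (2 * B))).
  pose proof (Rmin_r (delta / 2) (eps / (2 * B))).
  assert (Hsum := left_riemann_sum_error (fun t => g (t - tau)) h (eps / (2 * T)) k Hh).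
  rewrite Hkh in Hsum.
  replace (T * (eps / (2 * T))) with (eps / 2) in Hsum by (field; lra).
  assert (Hriemann : Rabs (RInt (fun t => g (t - tau)) 0 T
                           - h * fsum k (fun n => g (INR n * h - tau))) <= eps / 2).
  { apply Hsum.
    - intros x. apply (continuous_comp (fun t => t - tau) g); [|apply Hg].
      apply (continuous_minus (V := R_NormedModule));
        [apply continuous_id|apply continuous_const].
    - intros s t Hs Hst Ht. left.
      apply Hunif; [lra|lra|]. rewrite Rabs_right; lra. }
  assert (Hlast : h * Rabs (g (T - tau)) <= eps / 2).
  { apply (Rle_trans _ (h * B)); [apply Rmult_le_compat_l; [lra|apply Hbound; lra]|].
    apply (Rmult_le_reg_r (/ B)); [now apply Rinv_0_lt_compat|].
    replace (eps / 2 * / B) with (eps / (2 * B)) by (field; lra).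
    replace (h * B * / B) with h by (field; lra). lra. }
  rewrite fsum_S, Hkh, Rmult_plus_distr_l.
  replace (RInt (fun t => g (t - tau)) 0 T
           - (h * fsum k (fun n => g (INR n * h - tau)) + h * g (T - tau)))
    with ((RInt (fun t => g (t - tau)) 0 T - h * fsum k (fun n => g (INR n * h - tau)))
          + - (h * g (T - tau))) by ring.
  eapply Rle_trans; [apply Rabs_triang|].
  rewrite Rabs_Ropp, Rabs_mult, (Rabs_right h) by lra. lra.
Qed.

Lemma shifted_riemann_sum_lower_bound (g : R -> R) T : 0 < T -> (forall x, continuous g x) ->
  (forall tau, 0 <= tau <= T -> 0 < RInt (fun t => g (t - tau)) 0 T) ->
  exists N0 d, (1 <= N0)%nat /\ 0 < d /\
    forall N fs, (N0 <= N)%nat -> 0 < fs -> T = (INR N - 1) / fs ->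
    forall tau, 0 <= tau <= T -> d * fs <= fsum N (fun n => g (INR n / fs - tau)).
Proof.
  intros HT Hg Hpos.
  destruct (RInt_shift_pos_min g T) as [m [Hm Hmin]]; [lra|exact Hg|exact Hpos|].
  destruct (shifted_riemann_sum_uniform g T (m / 2)) as [h0 [Hh0 Hclose]]; [lra|lra|exact Hg|].
  destruct (archimed_cor1 (h0 / T)) as [n0 [Hn0 Hn0pos]]; [now apply Rdiv_lt_0_compat|].
  exists (S n0), (m / 2). split; [lia|]. split; [lra|].
  intros N fs HN Hfs HTN tau Htau.
  destruct N as [|k]; [lia|].
  rewrite S_INR in HTN. replace (INR k + 1 - 1) with (INR k) in HTN by ring.
  set (h := / fs).
  assert (Hh : 0 < h) by now apply Rinv_0_lt_compat.
  assert (HTk : INR k * h = T) by (rewrite HTN; reflexivity).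
  assert (Hk : 0 < INR n0 <= INR k) by (split; [apply lt_0_INR|apply le_INR]; lia).
  assert (Hhh0 : h <= h0).
  { replace h with (T * / INR k) by (rewrite <- HTk; field; lra).
    apply (Rle_trans _ (T * / INR n0)).
    - apply Rmult_le_compat_l; [lra|]. apply Rinv_le_contravar; lra.
    - apply (Rmult_le_reg_r (/ T)); [now apply Rinv_0_lt_compat|].
      replace (T * / INR n0 * / T) with (/ INR n0) by (field; lra).
      unfold Rdiv in Hn0. lra. }
  specialize (Hclose h k tau (conj Hh Hhh0) HTk Htau).
  specialize (Hmin tau Htau).
  apply Rabs_le_between in Hclose.
  apply (Rmult_le_reg_l h); [exact Hh|].
  replace (h * (m / 2 * fs)) with (m / 2) by (unfold h; field; lra).
  change (fun n => g (INR n / fs - tau)) with (fun n => g (INR n * h - tau)). lra.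
Qed.

Lemma dist3_pos p q : p <> q -> 0 < dist3 p q.
Proof.
  destruct p as [[x1 y1] z1], q as [[x2 y2] z2]; simpl; intros Hpq.
  apply sqrt_lt_R0.
  assert (Hsq : forall u v, u <> v -> 0 < (u - v) ^ 2).
  { intros u v Huv. rewrite <- Rsqr_pow2. apply Rsqr_pos_lt. intros E. apply Huv. lra. }
  pose proof (pow2_ge_0 (x1 - x2)); pose proof (pow2_ge_0 (y1 - y2));
    pose proof (pow2_ge_0 (z1 - z2)).
  destruct (Req_dec x1 x2) as [<-|Hx]; [|pose proof (Hsq _ _ Hx); lra].
  destruct (Req_dec y1 y2) as [<-|Hy]; [|pose proof (Hsq _ _ Hy); lra].
  destruct (Req_dec z1 z2) as [<-|Hz]; [congruence|pose proof (Hsq _ _ Hz); lra].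
Qed.

Lemma in_Cset_dist c Tmax M mic p m : in_Cset c Tmax M mic p -> (m < M)%nat ->
  0 < dist3 p (mic m) <= c * Tmax.
Proof. intros [Hball Hout] Hm. split; [apply dist3_pos, Hout|apply Hball]; exact Hm. Qed.

Lemma fsum_gamma_mn c fs kappa mic m N p :
  fsum N (fun n => gamma_mn c fs kappa mic m n p)
  = fsum N (fun n => kappa (INR n / fs - dist3 p (mic m) / c)) / (4 * PI * dist3 p (mic m)).
Proof.
  unfold gamma_mn. set (D := dist3 p (mic m)).
  rewrite (fsum_ext N _ (fun n => / (4 * PI * D) * kappa (INR n / fs - D / c)))
    by (intros; unfold Rdiv at 1; ring).
  rewrite fsum_mult_l. unfold Rdiv at 3. ring.
Qed.

(* Distances to a microphone are at most c Tmax on C, so the delays lie in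
   [0, Tmax] and the spherical attenuation is at least 1 / (4 pi c Tmax). *)
Lemma fsum_gamma_mn_ge c Tmax fs kappa M N mic m p d :
  0 < c -> (m < M)%nat -> in_Cset c Tmax M mic p -> 0 <= d * fs ->
  (forall tau, 0 <= tau <= Tmax -> d * fs <= fsum N (fun n => kappa (INR n / fs - tau))) ->
  d * fs / (4 * PI * (c * Tmax)) <= fsum N (fun n => gamma_mn c fs kappa mic m n p).
Proof.
  intros Hc Hm Hp Hd Hsum.
  destruct (in_Cset_dist c Tmax M mic p m Hp Hm) as [HD HDmax].
  set (D := dist3 p (mic m)) in *.
  assert (Hdelay : 0 <= D / c <= Tmax).
  { split; [apply Rlt_le, Rdiv_lt_0_compat; lra|].
    apply (Rmult_le_reg_r c); [exact Hc|]. unfold Rdiv. rewrite Rmult_assoc, Rinv_l; lra. }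
  pose proof PI_RGT_0.
  rewrite fsum_gamma_mn. fold D. unfold Rdiv at 1 3.
  apply Rmult_le_compat; [exact Hd| |now apply Hsum|].
  - apply Rlt_le, Rinv_0_lt_compat. nra.
  - apply Rinv_le_contravar; nra.
Qed.

Lemma GammaK_norm_ge_row_sum c fs kappa M N K mic a r m : (m < M)%nat ->
  fsum N (fun n => fsum K (fun k => a k * gamma_mn c fs kappa mic m n (r k)))
  <= INR N * GammaK_norm c fs kappa M N K mic a r.
Proof.
  intros Hm.
  exact (fsum_row_le_norm M N
           (fun m n => fsum K (fun k => a k * gamma_mn c fs kappa mic m n (r k))) m Hm).
Qed.

Theorem corollary2 (c Tmax : R) (M K : nat) (mic : nat -> pt) (kappa : R -> R) :
  0 < c -> 0 < Tmax -> (1 <= M)%nat -> (1 <= K)%nat ->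
  (forall x, continuous kappa x) ->
  0 < kappa 0 ->
  is_lim kappa p_infty (Finite 0) -> is_lim kappa m_infty (Finite 0) ->
  (forall tau, 0 <= tau <= Tmax ->
     0 < RInt (fun t => kappa (t - tau)) 0 Tmax) ->
  exists N' : nat, (1 <= N')%nat /\
    forall (N : nat) (fs : R), (N' <= N)%nat -> 0 < fs ->
      Tmax = (INR N - 1) / fs ->
      exists C : R, 0 < C /\
        forall (a : nat -> R) (r : nat -> pt),
          (forall k, (k < K)%nat -> 0 <= a k) ->
          (forall k, (k < K)%nat -> in_Cset c Tmax M mic (r k)) ->
          GammaK_norm c fs kappa M N K mic a r >= C * fsum K a.
Proof.
  intros Hc HT HM _ Hkappa _ _ _ Hpos.
  destruct (shifted_riemann_sum_lower_bound kappa Tmax HT Hkappa Hpos)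
    as (N0 & d & HN0 & Hd & Hsum).
  exists N0. split; [exact HN0|].
  intros N fs HN Hfs HTN.
  assert (HNpos : 0 < INR N) by (apply lt_0_INR; lia).
  set (L := d * fs / (4 * PI * (c * Tmax))).
  assert (HL : 0 < L).
  { pose proof PI_RGT_0. apply Rdiv_lt_0_compat; apply Rmult_lt_0_compat; nra. }
  exists (L / INR N). split; [now apply Rdiv_lt_0_compat|].
  intros a r Ha Hr.
  assert (Hrow : L * fsum K a
                 <= fsum N (fun n => fsum K (fun k => a k * gamma_mn c fs kappa mic 0 n (r k)))).
  { rewrite fsum_swap, <- fsum_mult_l. apply fsum_le. intros k Hk.
    rewrite fsum_mult_l, Rmult_comm. apply Rmult_le_compat_l; [now apply Ha|].
    apply (fsum_gamma_mn_ge c Tmax fs kappa M); [exact Hc|lia|now apply Hr|nra|].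
    intros tau Htau. now apply Hsum. }
  pose proof (GammaK_norm_ge_row_sum c fs kappa M N K mic a r 0 ltac:(lia)).
  apply Rle_ge, (Rmult_le_reg_l (INR N)); [exact HNpos|].
  replace (INR N * (L / INR N * fsum K a)) with (L * fsum K a) by (field; lra).
  lra.
Qed.
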